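(* Let $n_1,n_2,n_3$ be pairwise coprime positive integers forming a minimal system of generators of $\mathcal S=\langle n_1,n_2,n_3\rangle$, and let $\{i,j,k\}=\{1,2,3\}$. If $$n_j\ \ge\ [-n_in_k^{-1}]_{n_j}\left(\left\lfloor\frac{n_k}{[n_in_j^{-1}]_{n_k}}\right\rfloor+1\right),$$ then $$c_k=n_j-[-n_in_k^{-1}]_{n_j}\left\lfloor\frac{n_k}{[n_in_j^{-1}]_{n_k}}\right\rfloor .$$
   Context: $\mathbb N$ denotes the nonnegative integers. For integers $a_1,\dots,a_r$, $\langle a_1,\dots,a_r\rangle=\{\sum t_la_l: t_l\in\mathbb N\}$. Minimal system of generators means that no $n_l$ belongs to the monoid generated by the other two. For an integer $m$ and $n\ge 1$, $[m]_n\in\{0,\dots,n-1\}$ denotes the remainder of $m$ upon division by $n$; for $a$ coprime to $n$, the symbol $a^{-1}$ inside $[\cdot]_n$ denotes a multiplicative inverse of $a$ modulo $n$. For $\{i,j,k\}=\{1,2,3\}$, $\mathcal S_k=\{M\in\mathbb N: Mn_k\in\langle n_i,n_j\rangle\}$ and $c_k=\min(\mathcal S_k\setminus\{0\})$ (the minimal relation for $n_k$). *)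

From mathcomp Require Import all_boot.
Set Implicit Arguments. Unset Strict Implicit. Unset Printing Implicit Defensive.

Definition in_monoid2 (a b x : nat) : Prop := exists t u : nat, x = t * a + u * b.

Definition minimal_gens (n : 'I_3 -> nat) : Prop :=
  forall l m p : 'I_3, l != m -> m != p -> l != p -> ~ in_monoid2 (n m) (n p) (n l).

Definition S_set (n : 'I_3 -> nat) (i j k : 'I_3) (M : nat) : Prop :=
  in_monoid2 (n i) (n j) (M * n k).

Definition is_c (n : 'I_3 -> nat) (i j k : 'I_3) (c : nat) : Prop :=
  [/\ 0 < c, S_set n i j k c & forall M, 0 < M -> S_set n i j k M -> c <= M].

(* a multiplicative inverse of a modulo m, taken in {0,...,m-1}
   (well defined when coprime a m and m >= 2) *)
Definition inv_mod (a m : nat) : nat :=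
  find (fun x => a * x %% m == 1 %% m) (iota 0 m).

Definition negmod (x m : nat) : nat := (m - x %% m) %% m.

From mathcomp Require Import all_boot zify.

(* Write A, B, C for n_i, n_j, n_k, u := [-A C^-1]_B and v := [A B^-1]_C.  The number
   u C + A is divisible by B, with quotient w congruent to v modulo C; and w < C, since
   otherwise A = (w - C) B + (B - u) C would lie in <B, C>.  Hence v B = u C + A.
   With q := C / v this gives (B - u q) C = q A + (C - q v) B, so B - u q lies in S_k.
   Conversely, if M C = t A + s B then (M + t u) C = (t v + s) B, so M + t u = m B and
   m C = t v + s by coprimality; t >= m (q + 1) would force m C < t v, so
   t < m (q + 1), and then u (q + 1) <= B yields M = m B - t u >= B - u q. *)

Lemma mul_inv_mod a m : 0 < a -> 0 < m -> coprime a m ->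
  a * inv_mod a m = 1 %[mod m].
Proof.
move=> a_gt0 m_gt0 co.
have has_inv : has (fun x => a * x %% m == 1 %% m) (iota 0 m).
  have [[s t] /= bezout] := coprimeP _ a_gt0 co.
  apply/hasP; exists (s %% m); first by rewrite mem_iota ltn_mod.
  by rewrite modnMmr (_ : a * s = t * m + 1) ?modnMDl //; lia.
have inv_lt : inv_mod a m < m by move: has_inv; rewrite has_find size_iota.
by apply/eqP; have := nth_find 0 has_inv; rewrite nth_iota.
Qed.

Lemma negmodDl x m : 0 < m -> negmod x m + x = 0 %[mod m].
Proof.
move=> m_gt0; rewrite /negmod modnDml -modnDmr subnK ?modnn ?mod0n //.
by rewrite ltnW ?ltn_mod.
Qed.

Section RelationFromMinimality.

Variables A B C : nat.
Hypotheses (B_gt0 : 0 < B) (C_gt0 : 0 < C).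
Hypotheses (coBC : coprime B C) (coCB : coprime C B).
Hypothesis A_notin : ~ in_monoid2 B C A.

Let u := negmod (A * inv_mod C B) B.
Let v := (A * inv_mod B C) %% C.

Lemma dvdn_negmod_mulD : B %| u * C + A.
Proof.
set x := inv_mod C B.
have AE : A = A * (C * x) %[mod B].
  by rewrite -modnMmr mul_inv_mod // modnMmr muln1.
apply/eqP; rewrite -modnDmr AE modnDmr (mulnC C x) mulnA -mulnDl.
by rewrite -modnMml negmodDl // mod0n mul0n mod0n.
Qed.

Let w := (u * C + A) %/ B.

Lemma negmod_quot_mulE : w * B = u * C + A.
Proof. exact: divnK dvdn_negmod_mulD. Qed.

Lemma negmod_quot_modE : w = A * inv_mod B C %[mod C].
Proof.
set y := inv_mod B C.
have wE : w = w * (B * y) %[mod C].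
  by rewrite -modnMmr mul_inv_mod // modnMmr muln1.
by rewrite wE mulnA negmod_quot_mulE mulnDl mulnAC modnMDl.
Qed.

Lemma negmod_quot_lt : w < C.
Proof.
rewrite ltnNge; apply/negP => C_le_w; apply: A_notin.
have u_le_B : u <= B by rewrite ltnW ?ltn_mod.
have wB := negmod_quot_mulE.
exists (w - C), (B - u); nia.
Qed.

Lemma negmod_relation : v * B = u * C + A.
Proof. by rewrite /v -negmod_quot_modE modn_small ?negmod_quot_lt ?negmod_quot_mulE. Qed.

End RelationFromMinimality.

Section MinimalMultiple.

Variables A B C u v : nat.
Hypothesis relation : v * B = u * C + A.

Let q := C %/ v.
Hypothesis u_small : u * q.+1 <= B.

Lemma relation_mem_monoid : in_monoid2 A B ((B - u * q) * C).
Proof.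
have qv_le : q * v <= C := leq_divM C v.
exists q, (C - q * v); nia.
Qed.

Hypotheses (A_gt0 : 0 < A) (coBC : coprime B C).

Lemma relation_v_gt0 : 0 < v.
Proof. by case: v relation => //; rewrite mul0n; lia. Qed.

Lemma relation_B_gt0 : 0 < B.
Proof. by case: B relation => //; rewrite muln0; lia. Qed.

Lemma relation_multiple_lower_bound M :
  0 < M -> in_monoid2 A B (M * C) -> B - u * q <= M.
Proof.
move=> M_gt0 [t [s MC]].
have lifted : (M + t * u) * C = (t * v + s) * B by nia.
have /dvdnP [m Mtu] : B %| M + t * u.
  by rewrite -(Gauss_dvdl _ coBC) lifted dvdn_mull.
have mC : m * C = t * v + s.
  by apply/eqP; rewrite -(eqn_pmul2r relation_B_gt0) mulnAC -Mtu lifted.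
have C_lt : C < q.+1 * v := ltn_ceil C relation_v_gt0.
have m_gt0 : 0 < m by case: m Mtu {mC} => //; lia.
case: (ltnP t (m * q.+1)) => [t_lt | t_ge]; first nia.
have : m * (q.+1 * v) <= t * v by rewrite mulnA leq_mul2r t_ge orbT.
rewrite -(ltn_pmul2l m_gt0) in C_lt; lia.
Qed.

Lemma relation_minimal_multiple :
  [/\ 0 < B - u * q, in_monoid2 A B ((B - u * q) * C)
    & forall M, 0 < M -> in_monoid2 A B (M * C) -> B - u * q <= M].
Proof.
split; [|exact: relation_mem_monoid|exact: relation_multiple_lower_bound].
by move: u_small relation_B_gt0; rewrite mulnS; nia.
Qed.

End MinimalMultiple.

Theorem mainTheorem6 (n : 'I_3 -> nat) (i j k : 'I_3)
  (hpos : forall l, 0 < n l)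
  (hcop : forall l m, l != m -> coprime (n l) (n m))
  (hmin : minimal_gens n)
  (hij : i != j) (hjk : j != k) (hik : i != k)
  (hyp : negmod (n i * inv_mod (n k) (n j)) (n j) *
           (n k %/ ((n i * inv_mod (n j) (n k)) %% n k)).+1 <= n j) :
  is_c n i j k
    (n j - negmod (n i * inv_mod (n k) (n j)) (n j) *
             (n k %/ ((n i * inv_mod (n j) (n k)) %% n k))).
Proof.
have coprime_jk := hcop j k hjk.
have coprime_kj : coprime (n k) (n j) by apply: hcop; rewrite eq_sym.
have relation := @negmod_relation (n i) (n j) (n k) (hpos j) (hpos k)
  coprime_jk coprime_kj (hmin i j k hij hjk hik).
exact: (@relation_minimal_multiple _ _ _ _ _ relation hyp (hpos i) coprime_jk).
Qed.
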